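(* For integers $m,n\ge0$ let $p_m(t,n)=D_m(C(t);n)\in\mathbb Z[t]$. Then every $p_m(t,n)$ is a nonzero polynomial, $p_m(t,0)=1$, $p_m(t,1)=C_m(t)$, and for all $m\ge0$, $n\ge2$, $$p_m(t,n-1)p_{m+2}(t,n-1)-p_{m+1}(t,n-1)^2=p_m(t,n)\,p_{m+2}(t,n-2).$$ Consequently, if $(q_m(n))_{m,n\ge0}$ is any family of elements of the field $\mathbb Q(t)$ with $q_m(0)=1$, $q_m(1)=C_m(t)$ for all $m\ge0$ and $q_m(n-1)q_{m+2}(n-1)-q_{m+1}(n-1)^2=q_m(n)q_{m+2}(n-2)$ for all $m\ge0,n\ge2$, then $q_m(n)=p_m(t,n)$ for all $m,n\ge0$.
   Context: The Narayana polynomials are $C_0(t)=1$ and $C_n(t)=\sum_{k=0}^{n-1}\binom{n-1}{k}\binom{n}{k}\frac{1}{k+1}t^k$ for $n\ge1$ (so $C_n(1)$ is the Catalan number $C_n$); they are extended by $C_n(t)=0$ for $n<0$. For $m\in\mathbb Z$ and $n\ge0$, $D_m(C(t);n)=\det(C_{i+j+m}(t))_{i,j=0}^{n-1}$, the $0\times0$ determinant being $1$. *)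

From mathcomp Require Import all_boot all_order all_algebra fraction.
Set Implicit Arguments. Unset Strict Implicit. Unset Printing Implicit Defensive.
Import Order.TTheory GRing.Theory Num.Theory.
Local Open Scope ring_scope.

Definition narayana (n : nat) : {poly rat} :=
  if n is 0 then 1
  else \sum_(k < n) (('C(n.-1, k) * 'C(n, k))%:R / (k.+1)%:R) *: 'X^k.

Definition hankelD (m n : nat) : {poly rat} :=
  \det (\matrix_(i < n, j < n) narayana (i + j + m)).

Definition Qt := {fraction {poly rat}}.
Definition toQt (p : {poly rat}) : Qt := tofrac p.

(* Integrality: the Narayana coefficients binom(n,k) binom(n+1,k) / (k+1) are
   integers, and determinants of integral matrices are integral.
   Nonvanishing: at t = 1 the Narayana polynomials become Catalan numbers, and
   the Catalan Hankel matrix is a Gram matrix V V^T of ballot numbers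
   (concatenating two nonnegative lattice paths); V is in echelon form, so
   V V^T is positive definite.
   Recurrence: it is the Desnanot-Jacobi identity, proved with Schur
   complements, applied to the first and last rows and columns of the Hankel
   matrix; the four minors are again Hankel determinants with shifted index.
   Uniqueness: the recurrence determines q_m(n) from smaller n, dividing by
   p_{m+2}(t, n-2), which is nonzero. *)

From mathcomp Require Import all_boot all_order all_algebra fraction.
From mathcomp Require Import perm ring zify.
Set Implicit Arguments. Unset Strict Implicit. Unset Printing Implicit Defensive.
Import Order.TTheory GRing.Theory Num.Theory.

(* The number of +-1 lattice paths of length [n] from height [k] down to 0
   that never go below 0. *)
Fixpoint ballot (n k : nat) : nat :=
  if n is n'.+1 then (if k is k'.+1 then ballot n' k' else 0) + ballot n' k.+1
  else (k == 0).

Lemma ballot_small n k : n < k -> ballot n k = 0.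
Proof. by elim: n k => [|n IH] [|k] //= h; rewrite !IH //; lia. Qed.

Lemma ballot_diag n : ballot n n = 1.
Proof. by elim: n => //= n ->; rewrite ballot_small. Qed.

Lemma ballot_gram_shift N a c : a < N -> c < N ->
  \sum_(0 <= k < N) ballot a.+1 k * ballot c k =
  \sum_(0 <= k < N) ballot a k * ballot c.+1 k.
Proof.
case: N => [//|N] ha hc; rewrite !big_nat_recl //=.
under eq_bigr do rewrite mulnDl.
under [in RHS]eq_bigr do rewrite mulnDr.
rewrite !big_split /= !add0n.
case: N ha hc => [|N] ha hc.
  by move: ha hc; rewrite !ltnS !leqn0 => /eqP-> /eqP->; rewrite !big_geq.
rewrite [\sum_(0 <= i < N.+1) ballot a i * _]big_nat_recl //.
rewrite [\sum_(0 <= i < N.+1) ballot a i.+1 * _]big_nat_recl //.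
rewrite [\sum_(0 <= i < N.+1) ballot a i.+2 * _]big_nat_recr //.
rewrite [\sum_(0 <= i < N.+1) ballot a i.+1 * _]big_nat_recr //=.
rewrite (ballot_small (n := a) (k := N.+2)) ?(ballot_small (n := c) (k := N.+2)); lia.
Qed.

Lemma ballot_gram N a c : a + c < N ->
  \sum_(0 <= k < N) ballot a k * ballot c k = ballot (a + c) 0.
Proof.
elim: a c => [|a IH] c h.
  case: N h => [//|N] h.
  by rewrite big_nat_recl //= mul1n big1 ?addn0.
rewrite ballot_gram_shift; try lia.
by rewrite IH ?addSnnS //; lia.
Qed.

Definition binom_pred n d := if d is d'.+1 then 'C(n, d') else 0.

Lemma binS_pred n d : 'C(n.+1, d) = 'C(n, d) + binom_pred n d.
Proof. by case: d => [|d] //=; rewrite !bin0 addn0. Qed.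

(* The reflection principle: [ballot n k = 'C(n, d) - 'C(n, d.-1)] for [n = k + 2 d]. *)
Lemma ballot_binom n k d : k + d.*2 = n -> ballot n k + binom_pred n d = 'C(n, d).
Proof.
elim: n k d => [|n IH] k d; first by case: k => //; case: d.
case: k => [|k] /= e.
  case: d e => [|d] e; first by lia.
  have := IH 1 d; rewrite /= => h.
  rewrite binS binS_pred add0n.
  have -> : 'C(n, d.+1) = 'C(n, d).
    by rewrite -(bin_sub (n := n) (m := d)); [congr 'C(_, _)|]; lia.
  by rewrite -h /binom_pred; lia.
case: d e => [|d] e.
  rewrite (ballot_small (n := n) (k := k.+2)) /=; last by lia.
  by have := IH k 0 ltac:(lia); rewrite /= !bin0 !addn0 => ->.
have h1 := IH k d.+1 ltac:(lia); have h2 := IH k.+2 d ltac:(lia).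
by move: h1 h2; rewrite /binom_pred binS binS_pred /binom_pred; lia.
Qed.

Definition catalan d := ballot d.*2 0.

Lemma catalan_binom d : catalan d * d.+1 = 'C(d.*2, d).
Proof.
have := ballot_binom (add0n d.*2); rewrite /catalan.
case: d => [//|d] /= h.
have := mul_bin_left (d.+1).*2 d.
have -> : (d.+1).*2 - d = d.+2 by lia.
nia.
Qed.

Lemma vandermonde_catalan n :
  \sum_(k < n.+1) 'C(n, k) * 'C(n.+2, k.+1) = 'C((n.+1).*2, n.+1).
Proof.
have := binomial.Vandermonde n n.+2 n.+1.
rewrite big_ord_recr /= bin_small // mul0n addn0 -addnn addnS addSn => <-.
apply: eq_bigr => k _; congr (_ * _).
rewrite -(bin_sub (n := n.+2) (m := k.+1)); last by have := ltn_ord k; lia.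
by congr 'C(_, _); have := ltn_ord k; lia.
Qed.

Lemma narayana_coef_integral n k : k <= n ->
  'C(n, k) * 'C(n.+1, k) =
  k.+1 * ('C(n, k) * 'C(n.+1, k) - 'C(n.+1, k.+1) * binom_pred n k).
Proof.
move=> hk.
suff : k.+1 * ('C(n.+1, k.+1) * binom_pred n k) = k * ('C(n, k) * 'C(n.+1, k)) by nia.
case: k hk => [|k] hk; first by rewrite /= !muln0.
rewrite /= mulnA mul_bin_left.
have := mul_bin_left n k; have -> : n.+1 - k.+1 = n - k by lia.
nia.
Qed.

Local Open Scope ring_scope.

Lemma narayana_polyOver_int n : narayana n \is a polyOver Num.int.
Proof.
case: n => [|n]; first by rewrite polyOverC.
rewrite /narayana /= -(poly_def n.+1 (fun k => ('C(n, k) * 'C(n.+1, k))%:R / k.+1%:R)).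
apply: polyOver_poly => k hk.
rewrite (narayana_coef_integral (hk : k <= n)%N) natrM mulrAC.
by rewrite divff ?mul1r ?rpred_nat // pnatr_eq0.
Qed.

Lemma narayana_at1 n : (narayana n).[1] = (catalan n)%:R.
Proof.
apply: (mulIf (x := n.+1%:R)); first by rewrite pnatr_eq0.
rewrite -natrM catalan_binom.
case: n => [|n]; first by rewrite /narayana /= mulr1 -polyC1 hornerC.
rewrite /narayana /= horner_sum mulr_suml -vandermonde_catalan natr_sum.
apply: eq_bigr => k _.
rewrite hornerZ hornerXn expr1n mulr1 /=.
have h : ('C(n.+2, k.+1))%:R = ('C(n.+1, k))%:R * (n.+2)%:R / (k.+1)%:R :> rat.
  by rewrite -natrM mulnC mul_bin_diag natrM [_ * _%:R]mulrC mulfK ?pnatr_eq0.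
by rewrite !natrM h; field; rewrite addrC natr1 pnatr_eq0.
Qed.

Definition hankel (R : Type) (c : nat -> R) m n : 'M[R]_n :=
  \matrix_(i < n, j < n) c (i + j + m)%N.

Lemma det_hankel_map (R S : comNzRingType) (f : {rmorphism R -> S}) c m n :
  f (\det (hankel c m n)) = \det (hankel (f \o c) m n).
Proof. by rewrite -det_map_mx; congr (\det _); apply/matrixP => i j; rewrite !mxE. Qed.

Lemma det_polyOver (R : nzRingType) (S : subringClosed R) n (A : 'M[{poly R}]_n) :
  (forall i j, A i j \is a polyOver S) -> \det A \is a polyOver S.
Proof.
move=> AS; apply: rpred_sum => s _.
by rewrite rpredM ?rpredX ?rpredN ?rpred1 ?rpred_prod.
Qed.

Lemma echelon_mulmx_eq0 (R : idomainType) n N (V : 'M[R]_(n, N)) (piv : 'I_n -> 'I_N) :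
  (forall i, V i (piv i) != 0) ->
  (forall i l : 'I_n, (l < i)%N -> V l (piv i) = 0) ->
  forall x : 'rV_n, x *m V = 0 -> x = 0.
Proof.
move=> Vpiv Vlow x xV0.
suff x0 d (j : 'I_n) : (n <= j + d)%N -> x 0 j = 0.
  by apply/rowP => j; rewrite mxE (x0 n) ?leq_addl.
elim: d j => [|d IH] j le_n_jd; first by have := ltn_ord j; lia.
have [//|lt_jd_n] := leqP n (j + d); first exact: IH.
have /eqP := congr1 (fun y : 'rV_N => y 0 (piv j)) xV0.
rewrite !mxE (bigD1 j) //= big1 ?addr0 ?mulf_eq0 ?(negbTE (Vpiv j)) ?orbF;
  first by move/eqP.
move=> l ne_lj.
case: (ltngtP l j) => [lt_lj|lt_jl|/val_inj eq_lj]; last by rewrite eq_lj eqxx in ne_lj.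
  by rewrite Vlow ?mulr0.
by rewrite IH ?mul0r //; lia.
Qed.

Lemma mul_tr_row_eq0 (R : realDomainType) N (u : 'rV[R]_N) : u *m u^T = 0 -> u = 0.
Proof.
move=> /(congr1 (fun M : 'M_1 => M 0 0)); rewrite !mxE => uu0.
have sq_ge0 l : 0 <= u 0 l * u^T l 0 by rewrite mxE -expr2 sqr_ge0.
apply/rowP => k; have /(_ k isT) := psumr_eq0P (fun l _ => sq_ge0 l) uu0.
by rewrite !mxE -expr2 => /eqP; rewrite sqrf_eq0 => /eqP.
Qed.

Lemma det_gram_neq0 (R : realFieldType) n N (V : 'M[R]_(n, N)) :
  (forall x : 'rV_n, x *m V = 0 -> x = 0) -> \det (V *m V^T) != 0.
Proof.
move=> Vinj; apply/negP => /det0P [x /negP x_neq0 xVV0]; apply/x_neq0/eqP.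
apply/Vinj/mul_tr_row_eq0.
by rewrite trmx_mul mulmxA -(mulmxA x) xVV0 mul0mx.
Qed.

(* Row [i] of [V] is [ballot (2 (i + r) + e)] with [m = 2 r + e], [e = odd m],
   so that two row indices add up to [2 (i + j + m)]. *)
Lemma hankel_catalan_neq0 m n :
  \det (hankel (fun j => (catalan j)%:R : rat) m n) != 0.
Proof.
pose a (i : nat) := ((i + m./2).*2 + odd m)%N.
pose N := ((n + m) * 4).+1.
have a_lt i : (i < n)%N -> (a i < N)%N by rewrite /a /N; lia.
pose V : 'M[rat]_(n, N) := \matrix_(i, k) (ballot (a i) k)%:R.
have -> : hankel (fun j => (catalan j)%:R) m n = V *m V^T.
  apply/matrixP => i j; rewrite !mxE /catalan.
  under eq_bigr do rewrite !mxE -natrM.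
  rewrite -natr_sum -(big_mkord xpredT (fun k => ballot (a i) k * ballot (a j) k)).
  rewrite ballot_gram; last by have := ltn_ord i; have := ltn_ord j; rewrite /a /N; lia.
  by congr (ballot _ _)%:R; have := odd_double_half m; rewrite /a; lia.
apply/det_gram_neq0/(echelon_mulmx_eq0 (piv := fun i => Ordinal (a_lt i (ltn_ord i)))).
  by move=> i; rewrite mxE ballot_diag oner_eq0.
by move=> i l lt_li; rewrite mxE ballot_small //= /a; lia.
Qed.

Section Condensation.
Variable R : comUnitRingType.

Lemma det_block_schur p q (A : 'M[R]_p) (B : 'M[R]_(p, q)) (C : 'M[R]_(q, p))
    (M : 'M[R]_q) :
  M \in unitmx -> \det (block_mx A B C M) = \det M * \det (A - B *m invmx M *m C).
Proof.
move=> uM.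
have -> : block_mx A B C M =
    block_mx 1%:M (B *m invmx M) 0 1%:M *m block_mx (A - B *m invmx M *m C) 0 C M.
  rewrite mulmx_block !mul1mx !mul0mx ?mulmx0 ?add0r ?addr0.
  by rewrite subrK mulmxKV.
by rewrite det_mulmx det_ublock det_lblock !det1 !mul1r mulrC.
Qed.

Lemma det_mx22 (A : 'M[R]_2) : \det A = A 0 0 * A 1 1 - A 0 1 * A 1 0.
Proof.
rewrite (expand_det_row _ 0) !big_ord_recl big_ord0 addr0 /cofactor !det_mx11.
rewrite !mxE /= expr0 expr1 mul1r mulN1r mulrN.
by congr (_ * A _ _ - _ * A _ _); try congr (A _ _); exact: val_inj.
Qed.

Variable k : nat.
Implicit Type A : 'M[R]_(2 + k).

Definition corner_minor A (i j : 'I_2) : 'M[R]_(1 + k) :=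
  block_mx (ulsubmx A i j)%:M (row i (ursubmx A)) (col j (dlsubmx A)) (drsubmx A).

Lemma det_corner_minor A i j : drsubmx A \in unitmx ->
  \det (corner_minor A i j) =
  \det (drsubmx A) * (ulsubmx A - ursubmx A *m invmx (drsubmx A) *m dlsubmx A) i j.
Proof.
move=> uM; rewrite det_block_schur // det_mx11 !mxE mulr1n -row_mul.
by congr (_ * (_ - _)); apply: eq_bigr => l _; rewrite !mxE.
Qed.

Definition corner_idx (i : 'I_2) (a : 'I_(1 + k)) : 'I_(2 + k) :=
  if split a is inr b then rshift 2 b else lshift k i.

Lemma corner_minorE A i j a b :
  corner_minor A i j a b = A (corner_idx i a) (corner_idx j b).
Proof.
rewrite /corner_idx !mxE.
case: splitP => a' _; rewrite !mxE; case: splitP => b' _;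
  by rewrite !mxE ?(ord1 a') ?(ord1 b') ?mulr1n.
Qed.

Lemma desnanot_jacobi A : drsubmx A \in unitmx ->
  \det A * \det (drsubmx A) =
  \det (corner_minor A 0 0) * \det (corner_minor A 1 1) -
  \det (corner_minor A 0 1) * \det (corner_minor A 1 0).
Proof.
move=> uM; rewrite !det_corner_minor // -{1}(submxK A) det_block_schur // det_mx22.
ring.
Qed.

End Condensation.

Section HankelCondensation.
Variables (R : comUnitRingType) (c : nat -> R).

Lemma det_row_perm n (s : 'S_n) (A : 'M[R]_n) :
  \det (row_perm s A) = (-1) ^+ s * \det A.
Proof. by rewrite row_permE det_mulmx det_perm. Qed.

Lemma det_col_perm n (s : 'S_n) (A : 'M[R]_n) :
  \det (col_perm s A) = (-1) ^+ s * \det A.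
Proof. by rewrite col_permE det_mulmx det_perm odd_permV mulrC. Qed.

Lemma det_simperm n (s : 'S_n) (A : 'M[R]_n) :
  \det (row_perm s (col_perm s A)) = \det A.
Proof. by rewrite det_row_perm det_col_perm mulrA -expr2 sqrr_sign mul1r. Qed.

Variable k : nat.

(* [sigma] lists the indices of [hankel c m k.+2] in the order [0, k+1, 1, ..., k],
   putting the outer rows and columns first as [desnanot_jacobi] expects. *)
Let rot : 'S_k.+1 := perm (@ord_pred_inj k.+1).
Let sigma : 'S_k.+2 := lift_perm ord0 ord0 rot.

Lemma rot_rshift (b : 'I_k) : val (rot (rshift 1 b)) = b.
Proof. by rewrite permE /= add0n modnDr modn_small // leqW. Qed.

Lemma sigma_rshift (b : 'I_k) : val (sigma (rshift 2 b)) = b.+1.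
Proof.
have -> : rshift 2 b = lift ord0 (rshift 1 b) by exact: val_inj.
by rewrite lift_perm_lift /= rot_rshift.
Qed.

Lemma sigma_corner0 (a : 'I_(1 + k)) : val (sigma (corner_idx 0 a)) = a.
Proof.
rewrite /corner_idx; case: splitP => [a0 ->|b ->]; last by rewrite sigma_rshift.
have -> : lshift k (0 : 'I_2) = ord0 :> 'I_k.+2 by exact: val_inj.
by rewrite lift_perm_id ord1.
Qed.

Lemma sigma_corner1 (a : 'I_(1 + k)) : val (sigma (corner_idx 1 a)) = (rot a).+1.
Proof.
rewrite /corner_idx; case: splitP => [a0 Ea|b Ea].
  have -> : lshift k (1 : 'I_2) = lift ord0 ord0 :> 'I_k.+2 by exact: val_inj.
  have -> : a = ord0 by apply: val_inj; rewrite /= Ea ord1.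
  by rewrite lift_perm_lift /= permE.
have -> : a = rshift 1 b by exact: val_inj.
by rewrite sigma_rshift rot_rshift.
Qed.

Lemma hankel_condensation m : \det (hankel c m.+2 k) \is a GRing.unit ->
  \det (hankel c m k.+2) * \det (hankel c m.+2 k) =
  \det (hankel c m k.+1) * \det (hankel c m.+2 k.+1) - \det (hankel c m.+1 k.+1) ^+ 2.
Proof.
move=> u; pose A : 'M[R]_(2 + k) := row_perm sigma (col_perm sigma (hankel c m k.+2)).
have hA a b : A a b = c (sigma a + sigma b + m) by rewrite !mxE.
have dr : drsubmx A = hankel c m.+2 k.
  by apply/matrixP => a b; rewrite !mxE !sigma_rshift addSn addnS !addnS.
have minor a b i j :
    corner_minor A i j a b = c (sigma (corner_idx i a) + sigma (corner_idx j b) + m).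
  by rewrite corner_minorE hA.
have c00 : corner_minor A 0 0 = hankel c m k.+1.
  by apply/matrixP => a b; rewrite minor !sigma_corner0 mxE.
have c11 : corner_minor A 1 1 = row_perm rot (col_perm rot (hankel c m.+2 k.+1)).
  by apply/matrixP => a b; rewrite minor !mxE !sigma_corner1 addSn addnS !addnS.
have c01 : corner_minor A 0 1 = col_perm rot (hankel c m.+1 k.+1).
  by apply/matrixP => a b; rewrite minor !mxE sigma_corner0 sigma_corner1 addnS !addnS.
have c10 : corner_minor A 1 0 = row_perm rot (hankel c m.+1 k.+1).
  by apply/matrixP => a b; rewrite minor !mxE sigma_corner0 sigma_corner1 addSn !addnS.
have uA : drsubmx A \in unitmx by rewrite unitmxE dr.
rewrite -(det_simperm sigma) -/A -dr desnanot_jacobi // c00 c11 c01 c10 det_simperm.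
rewrite det_col_perm det_row_perm mulrACA -[(-1) ^+ rot * _]expr2 sqrr_sign.
by rewrite mul1r expr2.
Qed.
End HankelCondensation.

Lemma hankel_condensation_idomain (R : idomainType) (c : nat -> R) m k :
  \det (hankel c m.+2 k) != 0 ->
  \det (hankel c m k.+1) * \det (hankel c m.+2 k.+1) - \det (hankel c m.+1 k.+1) ^+ 2 =
  \det (hankel c m k.+2) * \det (hankel c m.+2 k).
Proof.
move=> nz; apply/eqP; rewrite -tofrac_eq; apply/eqP.
rewrite rmorphB rmorphXn !rmorphM !det_hankel_map.
by rewrite hankel_condensation // -det_hankel_map unitfE tofrac_eq0.
Qed.

Section CondensationUnique.
Variable R : idomainType.

Definition condensation_rec (q : nat -> nat -> R) :=
  forall m n, (2 <= n)%N ->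
    q m n.-1 * q m.+2 n.-1 - q m.+1 n.-1 ^+ 2 = q m n * q m.+2 (n - 2)%N.

Lemma condensation_rec_unique (p q : nat -> nat -> R) :
  (forall m n, p m n != 0) -> condensation_rec p -> condensation_rec q ->
  (forall m, q m 0 = p m 0) -> (forall m, q m 1 = p m 1) ->
  forall m n, q m n = p m n.
Proof.
move=> p_neq0 p_rec q_rec q0 q1.
suff qp n m : q m n = p m n /\ q m n.+1 = p m n.+1 by move=> m n; case: (qp n m).
elim: n m => [|n IH] m; first by rewrite q0 q1.
split; first by case: (IH m).
apply: (mulIf (p_neq0 m.+2 n)).
have := q_rec m n.+2 isT; have := p_rec m n.+2 isT; rewrite /= subn2 /=.
by case: (IH m) => _ <-; case: (IH m.+1) => _ <-; case: (IH m.+2) => <- <- -> ->.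
Qed.
End CondensationUnique.

Lemma hankelD_neq0 m n : hankelD m n != 0.
Proof.
apply: contra_neq (hankel_catalan_neq0 m n) => hD0.
rewrite -[RHS](horner0 1) -hD0 -horner_evalE det_hankel_map.
by congr (\det _); apply/matrixP => i j; rewrite !mxE /= horner_evalE narayana_at1.
Qed.

Lemma hankelD_condensation : condensation_rec hankelD.
Proof.
case=> [|m] [|[|k]] // _; rewrite /= subn2 /=;
  exact: hankel_condensation_idomain (hankelD_neq0 _ _).
Qed.

Theorem mainTheorem8 :
  (* p_m(t,n) lies in Z[t] *)
  (forall m n : nat, hankelD m n \is a polyOver Num.int) /\
  (forall m n : nat, hankelD m n != 0) /\
  (forall m : nat, hankelD m 0 = 1) /\
  (forall m : nat, hankelD m 1 = narayana m) /\
  (forall m n : nat, (2 <= n)%N ->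
     hankelD m n.-1 * hankelD m.+2 n.-1 - hankelD m.+1 n.-1 ^+ 2
       = hankelD m n * hankelD m.+2 (n - 2)) /\
  (forall q : nat -> nat -> Qt,
     (forall m : nat, q m 0%N = 1) ->
     (forall m : nat, q m 1%N = toQt (narayana m)) ->
     (forall m n : nat, (2 <= n)%N ->
        q m n.-1 * q m.+2 n.-1 - q m.+1 n.-1 ^+ 2 = q m n * q m.+2 (n - 2)%N) ->
     forall m n : nat, q m n = toQt (hankelD m n)).
Proof.
have hankelD0 m : hankelD m 0 = 1 by rewrite /hankelD det_mx00.
have hankelD1 m : hankelD m 1 = narayana m by rewrite /hankelD det_mx11 mxE.
split=> [m n|]; first by apply: det_polyOver => i j; rewrite mxE narayana_polyOver_int.
split; first exact: hankelD_neq0.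
do 3!split=> //; first exact: hankelD_condensation.
move=> q q0 q1 q_rec; apply: condensation_rec_unique q_rec _ _ => [m n|m n|m|m].
- by rewrite /toQt tofrac_eq0 hankelD_neq0.
- move=> n2; rewrite /toQt -!rmorphM -rmorphXn -rmorphB.
  by rewrite hankelD_condensation.
- by rewrite q0 /toQt hankelD0 rmorph1.
- by rewrite q1 hankelD1.
Qed.
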